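(* Let $(X,\rho)$ be a metric space, $f:X\to X$ continuous, $x\in X$, $\ell\in\mathbb N$, $n\ge2$ an integer and $\varepsilon>0$. Then \[ C_\ell(x,n,\varepsilon)=\frac{n-1}{n}\Big[\mathrm{RR}_\ell(x,n,\varepsilon)-(\ell-1)\Lambda_\ell(x,n,\varepsilon)\Big]+\delta^C_\ell,\qquad \frac1n\le\delta^C_\ell<\frac{2\ell}{n}. \]
   Context: Bowen metric $\rho_\ell(y,z)=\max_{0\le i<\ell}\rho(f^iy,f^iz)$; correlation sum $C_\ell(x,n,\varepsilon)=n^{-2}\#\{(i,j):0\le i,j<n,\ \rho_\ell(f^ix,f^jx)\le\varepsilon\}$. Recurrence plot $R(x,n,\varepsilon)$: $n\times n$ matrix ($0\le i,j<n$) with entry $1$ iff $\rho(f^ix,f^jx)\le\varepsilon$. A line of length $\ell$: triple $(i,j,\ell)$ with $0\le i,j\le n-\ell$, $i\ne j$, entries $(i+k,j+k)=1$ for $0\le k<\ell$, entry $(i-1,j-1)=0$ if $\min\{i,j\}>0$, entry $(i+\ell,j+\ell)=0$ if $\max\{i,j\}<n-\ell$. $N_l$ = number of lines of length exactly $l$ (boundary lines included), $\lambda_l=N_l/(n^2-n)$, $\Lambda_\ell=\sum_{l\ge\ell}\lambda_l$, $\mathrm{RR}_\ell=\sum_{l\ge\ell}l\lambda_l$. *)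

From HB Require Import structures.
From mathcomp Require Import all_boot all_order all_algebra.
From mathcomp Require Import reals.
Set Implicit Arguments. Unset Strict Implicit. Unset Printing Implicit Defensive.
Import Order.TTheory GRing.Theory Num.Theory.
Local Open Scope ring_scope.

Section RecPlots.
Variables (R : realType) (X : Type) (rho : X -> X -> R) (f : X -> X).

Definition is_metric : Prop :=
  [/\ forall y z, rho y z = 0 <-> y = z,
      forall y z, rho y z = rho z y &
      forall y z w, rho y w <= rho y z + rho z w].

Definition rho_continuous : Prop :=
  forall y e, 0 < e -> exists2 dl, 0 < dl &
    forall z, rho y z < dl -> rho (f y) (f z) < e.

Definition bowen (l : nat) (y z : X) : R :=
  \big[Num.max/0]_(i < l) rho (iter i f y) (iter i f z).

Definition corr_sum (l : nat) (x : X) (n : nat) (eps : R) : R :=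
  (#|[set p : 'I_n * 'I_n |
       bowen l (iter p.1 f x) (iter p.2 f x) <= eps]|)%:R / (n ^ 2)%:R.

Definition rp (x : X) (eps : R) (i j : nat) : bool :=
  rho (iter i f x) (iter j f x) <= eps.

Definition is_line (x : X) (n : nat) (eps : R) (i j l : nat) : bool :=
  [&& (i <= n - l)%N, (j <= n - l)%N, i != j,
      [forall k : 'I_l, rp x eps (i + k) (j + k)],
      (0 < minn i j)%N ==> ~~ rp x eps i.-1 j.-1 &
      (maxn i j < n - l)%N ==> ~~ rp x eps (i + l) (j + l)].

Definition nlines (x : X) (n : nat) (eps : R) (l : nat) : nat :=
  #|[set p : 'I_n.+1 * 'I_n.+1 | is_line x n eps p.1 p.2 l]|.

Definition lambda_ (x : X) (n : nat) (eps : R) (l : nat) : R :=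
  (nlines x n eps l)%:R / (n ^ 2 - n)%:R.

(* Lambda_l = sum_{l' >= l} lambda_{l'}; lines have length <= n, so the sum
   is taken over l <= l' <= n (terms with l' > n are 0 since N_{l'} = 0). *)
Definition Lambda_ (x : X) (n : nat) (eps : R) (l : nat) : R :=
  \sum_(l <= l' < n.+1) lambda_ x n eps l'.

Definition RR_ (x : X) (n : nat) (eps : R) (l : nat) : R :=
  \sum_(l <= l' < n.+1) l'%:R * lambda_ x n eps l'.

End RecPlots.

From HB Require Import structures.
From mathcomp Require Import all_boot all_order all_algebra.
From mathcomp Require Import reals.
From mathcomp Require Import ring zify.
Set Implicit Arguments. Unset Strict Implicit. Unset Printing Implicit Defensive.

(* [n^2 C_l] counts the pairs (i, j) in [0, n)^2 whose orbits stay
   [eps]-close for [l] steps.  Those with [i <> j] whose window [i, i + l),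
   [j, j + l) stays inside the plot are the diagonal segments of length [l] of
   the recurrence plot; a line of length [L >= l] contains [L - l + 1] of them,
   so they number [(n^2 - n) (RR_l - (l - 1) Lambda_l)].  The remaining pairs
   are the [n] diagonal ones and at most [2 (l - 1) n] pairs whose window
   leaves [0, n); divided by [n^2] they give [delta]. *)

Section DiagonalRuns.
Variable b : nat -> nat -> bool.

Definition diag_match (k i j : nat) := [forall t : 'I_k, b (i + t) (j + t)].

Lemma diag_matchP k i j :
  reflect (forall t, t < k -> b (i + t) (j + t)) (diag_match k i j).
Proof.
apply: (iffP forallP) => [h t tk | h [t tk]]; [exact: (h (Ordinal tk)) | exact: h].
Qed.

Lemma diag_matchS k i j : diag_match k.+1 i j = b i j && diag_match k i.+1 j.+1.
Proof.
apply/diag_matchP/andP => [h | [bij /diag_matchP h] [|t] tk].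
- split; first by have := h 0 isT; rewrite !addn0.
  by apply/diag_matchP => t tk; rewrite !addSnnS; apply: h.
- by rewrite !addn0.
- by rewrite -!addSnnS; apply: h.
Qed.

Lemma diag_matchSr k i j :
  diag_match k.+1 i j = diag_match k i j && b (i + k) (j + k).
Proof.
apply/diag_matchP/andP => [h | [/diag_matchP h bk] t].
- by split; [apply/diag_matchP => t tk; apply: h; lia | apply: h].
- by rewrite ltnS leq_eqVlt => /orP[/eqP-> | /h].
Qed.

Variable n : nat.

Definition diag_segment i j k := [&& i + k <= n, j + k <= n & diag_match k i j].

Definition diag_run i j := \max_(k < n.+1 | diag_segment i j k) k.

Lemma diag_segmentS i j k :
  diag_segment i j k.+1 = [&& i < n, j < n, b i j & diag_segment i.+1 j.+1 k].
Proof.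
rewrite /diag_segment diag_matchS !addSnnS.
by case: (b i j); case: diag_match; rewrite /= ?andbF //; lia.
Qed.

Lemma diag_segment_run_le i j k : diag_segment i j k -> k <= diag_run i j.
Proof.
move=> seg; have kn : k < n.+1 by case/and3P: seg; lia.
exact: (bigmax_sup (Ordinal kn)).
Qed.

Lemma diag_segment_run i j : i <= n -> j <= n -> diag_segment i j (diag_run i j).
Proof.
move=> i_n j_n; have seg0 : diag_segment i j 0.
  by rewrite /diag_segment !addn0 i_n j_n; apply/forallP => -[].
by rewrite /diag_run (bigmax_eq_arg ord0) //; case: arg_maxnP.
Qed.

Lemma leq_diag_run i j k : 0 < k -> (k <= diag_run i j) = diag_segment i j k.
Proof.
move=> k0; apply/idP/idP; last exact: diag_segment_run_le.
move=> k_run; have [/andP[i_n j_n] | out] := boolP ((i <= n) && (j <= n)).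
  have /and3P[ir jr /diag_matchP mr] := diag_segment_run i_n j_n.
  by apply/and3P; split; [lia | lia | apply/diag_matchP => t tk; apply: mr; lia].
suff : diag_run i j <= 0 by lia.
by apply/bigmax_leqP => t /and3P[]; lia.
Qed.

Lemma diag_run_le i j : diag_run i j <= n.
Proof. by apply/bigmax_leqP => t _; rewrite -ltnS. Qed.

Lemma diag_run_out i j : (n <= i) || (n <= j) -> diag_run i j = 0.
Proof.
move=> out; apply/eqP; rewrite -leqn0 leqNgt leq_diag_run //.
by rewrite /diag_segment; lia.
Qed.

Lemma diag_runS i j : diag_run i j =
  if [&& i < n, j < n & b i j] then (diag_run i.+1 j.+1).+1 else 0.
Proof.
case: ifP => [/and3P[i_n j_n bij] | stop].
  apply/eqP; rewrite eqn_leq; apply/andP; split.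
    case E: (diag_run i j) => [//|r]; rewrite ltnS.
    have : r.+1 <= diag_run i j by rewrite E.
    by rewrite leq_diag_run // diag_segmentS => /and4P[_ _ _ /diag_segment_run_le].
  by rewrite leq_diag_run // diag_segmentS i_n j_n bij diag_segment_run.
apply/eqP; rewrite -leqn0 leqNgt leq_diag_run // diag_segmentS.
by apply/negP => /and4P[i_n j_n bij _]; rewrite i_n j_n bij in stop.
Qed.

Definition run_start i j := (0 < minn i j) ==> ~~ b i.-1 j.-1.

Definition diag_line i j L :=
  [&& i <= n - L, j <= n - L, i != j, diag_match L i j, run_start i j &
      (maxn i j < n - L) ==> ~~ b (i + L) (j + L)].

Lemma diag_lineE i j L : 0 < L -> L <= n ->
  diag_line i j L = [&& i != j, run_start i j & diag_run i j == L].
Proof.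
move=> L0 Ln; apply/idP/and3P.
  case/and5P=> iL jL -> mL /andP[-> stop]; split=> //.
  have segL : diag_segment i j L by apply/and3P; split=> //; lia.
  rewrite eqn_leq (diag_segment_run_le segL) andbT leqNgt leq_diag_run //.
  rewrite /diag_segment diag_matchSr mL /=.
  by apply/negP => /and3P[iL1 jL1 bL]; move: stop; rewrite bL implybF; lia.
case=> neq start /eqP runL; have := leqnn L; rewrite -{2}runL leq_diag_run //.
case/and3P=> iL jL mL; rewrite /diag_line neq mL start /=.
apply/and3P; split; [lia | lia |].
apply/implyP => lt_end; apply/negP => bL.
have : L.+1 <= diag_run i j.
  by rewrite leq_diag_run // /diag_segment diag_matchSr mL bL; lia.
by rewrite runL ltnn.
Qed.

Lemma sum_diag_shift m (F G : nat -> nat -> nat) :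
  (forall j, F m j = 0) -> (forall i, F i m = 0) ->
  (forall j, G 0 j = 0) -> (forall i, G i 0 = 0) ->
  (forall i j, i < m -> j < m -> F i j = G i.+1 j.+1) ->
  \sum_(0 <= i < m.+1) \sum_(0 <= j < m.+1) F i j =
  \sum_(0 <= i < m.+1) \sum_(0 <= j < m.+1) G i j.
Proof.
move=> Fm_ F_m G0_ G_0 FG.
rewrite big_nat_recr //= [RHS]big_nat_recl //=.
have -> : \sum_(0 <= j < m.+1) F m j = 0 by apply: big1 => j _; apply: Fm_.
have -> : \sum_(0 <= j < m.+1) G 0 j = 0 by apply: big1 => j _; apply: G0_.
rewrite addn0 add0n.
apply: eq_big_nat => i /andP[_ im].
rewrite big_nat_recr //= [RHS]big_nat_recl //= F_m G_0 addn0 add0n.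
by apply: eq_big_nat => j /andP[_ jm]; apply: FG.
Qed.

Section Counting.
Variable l : nat.
Hypothesis l_gt0 : 0 < l.

Lemma run_excessS i j :
  (diag_run i j).+1 - l =
  (l <= diag_run i j) + (0 < diag_run i j) * ((diag_run i.+1 j.+1).+1 - l).
Proof. by rewrite [diag_run i j]diag_runS; case: ifP => _; lia. Qed.

(* Telescoping along each diagonal: the excess [r + 1 - l] of a maximal run of
   length [r] counts the positions on it from which a run of length [>= l]
   starts. *)
Lemma sum_run_excess_starts :
  \sum_(0 <= i < n.+1) \sum_(0 <= j < n.+1)
     ((i != j) && run_start i j) * ((diag_run i j).+1 - l) =
  \sum_(0 <= i < n.+1) \sum_(0 <= j < n.+1) ((i != j) && (l <= diag_run i j)).
Proof.
pose exc i j := (diag_run i j).+1 - l.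
pose inner i j := ((i != j) && (0 < diag_run i j)) * exc i.+1 j.+1.
pose cont i j := ((i != j) && ~~ run_start i j) * exc i j.
have shift : \sum_(0 <= i < n.+1) \sum_(0 <= j < n.+1) inner i j =
             \sum_(0 <= i < n.+1) \sum_(0 <= j < n.+1) cont i j.
  apply: sum_diag_shift => [j|i|j|i|i j i_n j_n].
  - by rewrite /inner diag_run_out ?leqnn // andbF.
  - by rewrite /inner diag_run_out ?leqnn ?orbT // andbF.
  - by rewrite /cont /run_start min0n andbF.
  - by rewrite /cont /run_start minn0 andbF.
  rewrite /inner /cont /run_start eqSS minnSS [diag_run i j]diag_runS i_n j_n.
  by case: (b i j).
apply/(@addIn (\sum_(0 <= i < n.+1) \sum_(0 <= j < n.+1) cont i j)).
rewrite -[in RHS]shift -!big_split; apply: eq_bigr => i _; rewrite -!big_split.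
apply: eq_bigr => j _; rewrite /inner /cont /exc (run_excessS i j).
by case: (i != j); case: run_start; rewrite /= ?mul1n ?mul0n ?add0n ?addn0.
Qed.

(* A line of length [L >= l] contains exactly [L - l + 1] diagonal segments of
   length [l], and every off-diagonal segment lies in exactly one line. *)
Lemma sum_weighted_lines :
  \sum_(l <= L < n.+1) (L.+1 - l) *
      \sum_(0 <= i < n.+1) \sum_(0 <= j < n.+1) diag_line i j L =
  \sum_(0 <= i < n) \sum_(0 <= j < n) ((i != j) && diag_segment i j l).
Proof.
have weight i j : \sum_(l <= L < n.+1) (L.+1 - l) * diag_line i j L =
                  ((i != j) && run_start i j) * ((diag_run i j).+1 - l).
  rewrite (eq_big_nat _ _ (F2 := fun L =>
     ((i != j) && run_start i j) * ((L.+1 - l) * (diag_run i j == L)))); last first.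
    move=> L /andP[lL Ln]; rewrite diag_lineE; [|lia|lia].
    by case: (i != j); case: run_start; case: (_ == _);
      rewrite /= ?mul0n ?muln0 ?mul1n ?muln1.
  rewrite -big_distrr /=; congr (_ * _).
  rewrite (eq_bigr (fun L => if L == diag_run i j then L.+1 - l else 0)); last first.
    by move=> L _; rewrite eq_sym; case: eqP; rewrite ?muln1 ?muln0.
  by rewrite -big_mkcond big_nat1_eq; have := diag_run_le i j; case: ifP; lia.
under eq_bigr do rewrite big_distrr /=.
rewrite exchange_big /=; under eq_bigr do (under eq_bigr do rewrite big_distrr /=;
  rewrite exchange_big /=; under eq_bigr do rewrite weight).
rewrite sum_run_excess_starts big_nat_recr //=.
have -> : \sum_(0 <= j < n.+1) ((n != j) && (l <= diag_run n j)) = 0.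
  by apply: big1 => j _; rewrite diag_run_out ?leqnn //= leqNgt l_gt0 andbF.
rewrite addn0; apply: eq_big_nat => i /andP[_ i_n].
rewrite big_nat_recr //= diag_run_out ?leqnn ?orbT //= leqNgt l_gt0 andbF addn0.
by apply: eq_big_nat => j _; rewrite leq_diag_run.
Qed.

End Counting.
End DiagonalRuns.

Lemma sum_nat_delta i m : \sum_(0 <= j < m) (i == j) = (i < m).
Proof.
rewrite (eq_bigr (fun j => if j == i then 1 else 0)) => [|j _]; last by rewrite eq_sym.
by rewrite -big_mkcond big_nat1_eq.
Qed.

Lemma sum_nat_ge c m : \sum_(0 <= i < m) (c <= i) = m - c.
Proof.
elim: m => [|m IH]; first by rewrite big_geq.
by rewrite big_nat_recr //= IH; case: leqP; lia.
Qed.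

Section Boundary.
Variables (b : nat -> nat -> bool) (n l : nat).

Definition boundary_count :=
  \sum_(0 <= i < n) \sum_(0 <= j < n)
     (diag_match b l i j && [|| i == j, n < i + l | n < j + l]).

Lemma sum_match_split :
  \sum_(0 <= i < n) \sum_(0 <= j < n) diag_match b l i j =
  \sum_(0 <= i < n) \sum_(0 <= j < n) ((i != j) && diag_segment b n i j l) +
  boundary_count.
Proof.
rewrite -big_split; apply: eq_bigr => i _; rewrite -big_split; apply: eq_bigr => j _.
rewrite /diag_segment; case: diag_match; case: eqP => _; rewrite /= ?andbT ?andbF //.
by case: leqP; case: leqP.
Qed.

Lemma boundary_count_ge (b_refl : forall i, b i i) : n <= boundary_count.
Proof.
have diag_count : \sum_(0 <= i < n) \sum_(0 <= j < n) (i == j) = n.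
  rewrite (eq_big_nat _ _ (F2 := fun _ => 1)) => [|i /andP[_ i_n]].
    by rewrite sum_nat_const_nat subn0 muln1.
  by rewrite sum_nat_delta i_n.
rewrite -[X in X <= _]diag_count; apply: leq_sum => i _; apply: leq_sum => j _.
case: eqVneq => [<-|] //=; rewrite andbT.
by have -> : diag_match b l i i by apply/diag_matchP => t _; apply: b_refl.
Qed.

(* Besides the [n] diagonal pairs, only [l - 1] values of [i] (and as many of
   [j]) have a window leaving [0, n). *)
Lemma boundary_count_lt : 0 < l -> 0 < n -> boundary_count < 2 * l * n.
Proof.
move=> l_gt0 n_gt0; pose K := \sum_(0 <= i < n) (n < i + l).
have K_le : K <= l.-1.
  rewrite /K (eq_big_nat _ _ (F2 := fun i => nat_of_bool (n.+1 - l <= i))) => [|i _].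
    by rewrite sum_nat_ge; lia.
  by congr nat_of_bool; apply/idP/idP; lia.
apply: (@leq_ltn_trans (\sum_(0 <= i < n) \sum_(0 <= j < n)
                         ((i == j) + (n < i + l) + (n < j + l)))).
  apply: leq_sum => i _; apply: leq_sum => j _.
  by case: diag_match; case: (i == j); case: (n < i + l); case: (n < j + l).
have row i : i < n -> \sum_(0 <= j < n) ((i == j) + (n < i + l) + (n < j + l)) =
                      1 + n * (n < i + l) + K.
  by move=> i_n; rewrite !big_split /= sum_nat_delta i_n sum_nat_const_nat subn0.
rewrite (eq_big_nat _ _ (F2 := fun i => 1 + n * (n < i + l) + K)) => [|i /andP[_]];
  last exact: row.
by rewrite !big_split /= !sum_nat_const_nat -big_distrr /= -/K !subn0; nia.
Qed.

End Boundary.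

Lemma card_pairs m (P : nat -> nat -> bool) :
  #|[set p : 'I_m * 'I_m | P p.1 p.2]| = \sum_(0 <= i < m) \sum_(0 <= j < m) P i j.
Proof.
rewrite -sum1_card big_mkcond /=.
rewrite (eq_bigr (fun p : 'I_m * 'I_m => nat_of_bool (P p.1 p.2))) => [|p _]; last first.
  by rewrite in_set; case: (P _ _).
rewrite -(pair_bigA _ (fun i j : 'I_m => nat_of_bool (P i j))) big_mkord /=.
by apply: eq_bigr => i _; rewrite big_mkord.
Qed.

Import Order.TTheory GRing.Theory Num.Theory.
Local Open Scope ring_scope.

Section RecurrencePlot.
Variables (R : realType) (X : Type) (rho : X -> X -> R) (f : X -> X).
Variables (x : X) (eps : R).

Let rpb := rp rho f x eps.

Lemma bowen_iter_le l i j : 0 <= eps ->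
  (bowen rho f l (iter i f x) (iter j f x) <= eps) = diag_match rpb l i j.
Proof.
move=> eps_ge0; rewrite /rpb /rp; apply/bigmax_leP/forallP => [[_ le_eps] t | le_eps].
  by have := le_eps t isT; rewrite -!iterD (addnC t i) (addnC t j).
by split=> // t _; have := le_eps t; rewrite -!iterD (addnC t i) (addnC t j).
Qed.

Lemma corr_sumE l n : 0 <= eps ->
  corr_sum rho f l x n eps =
    (\sum_(0 <= i < n) \sum_(0 <= j < n) diag_match rpb l i j)%N%:R / (n ^ 2)%:R.
Proof.
move=> eps_ge0; rewrite /corr_sum.
rewrite (card_pairs _ (fun i j => bowen rho f l (iter i f x) (iter j f x) <= eps)).
by congr (_%:R / _); apply: eq_bigr => i _; apply: eq_bigr => j _; rewrite bowen_iter_le.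
Qed.

Lemma nlinesE n L :
  nlines rho f x n eps L =
    (\sum_(0 <= i < n.+1) \sum_(0 <= j < n.+1) diag_line rpb n i j L)%N.
Proof. exact: card_pairs. Qed.

Lemma RR_sub_LambdaE n l :
  RR_ rho f x n eps l - (l%:R - 1) * Lambda_ rho f x n eps l =
    (\sum_(l <= L < n.+1) (L.+1 - l) * nlines rho f x n eps L)%N%:R / (n ^ 2 - n)%:R.
Proof.
rewrite /RR_ /Lambda_ /lambda_ mulr_sumr -sumrB natr_sum mulr_suml.
apply: eq_big_nat => L /andP[lL _].
by rewrite natrM (natrB _ (leqW lL)) mulrS; ring.
Qed.

End RecurrencePlot.

Theorem mainTheorem9 (R : realType) (X : Type) (rho : X -> X -> R)
  (f : X -> X) (x : X) (l n : nat) (eps : R) :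
  is_metric rho -> rho_continuous rho f ->
  (1 <= l)%N -> (2 <= n)%N -> 0 < eps ->
  exists delta : R,
    corr_sum rho f l x n eps =
      (n%:R - 1) / n%:R *
        (RR_ rho f x n eps l - (l%:R - 1) * Lambda_ rho f x n eps l) + delta
    /\ 1 / n%:R <= delta /\ delta < 2 * l%:R / n%:R.
Proof.
move=> [dist0 _ _] _ l_gt0 n_ge2 eps_gt0; have n_gt0 : (0 < n)%N by lia.
set b := rp rho f x eps.
have b_refl i : b i i by rewrite /b /rp (proj2 (dist0 _ _) erefl) ltW.
have lines_segments := sum_weighted_lines b n l_gt0.
have C_split := sum_match_split b n l.
exists ((boundary_count b n l)%:R / (n ^ 2)%:R).
have n2_gt0 : (0 : R) < (n ^ 2)%:R by rewrite ltr0n expn_gt0 n_gt0.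
have nR : n%:R != 0 :> R by rewrite pnatr_eq0 -lt0n.
split; [|split].
- rewrite RR_sub_LambdaE; under eq_big_nat do rewrite nlinesE.
  rewrite lines_segments corr_sumE ?ltW // C_split natrD natrB ?natrX; last first.
    exact: (leq_pexp2l n_gt0 (isT : 0 < 2)%N).
  field; have -> : n%:R ^+ 2 - n%:R = n%:R * (n%:R - 1) :> R by ring.
  by rewrite nR mulf_neq0 // subr_eq0 pnatr_eq1; lia.
- rewrite (_ : 1 / n%:R = n%:R / (n ^ 2)%:R :> R); last by rewrite natrX; field.
  by rewrite ler_pM2r ?invr_gt0 // ler_nat; apply: boundary_count_ge.
- rewrite (_ : 2 * l%:R / n%:R = (2 * l * n)%N%:R / (n ^ 2)%:R :> R); last first.
    by rewrite natrX !natrM; field.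
  by rewrite ltr_pM2r ?invr_gt0 // ltr_nat boundary_count_lt.
Qed.
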